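(* For each integer $i \ge 1$ let $X_i$ be the set of all positive integers $x$ with $\{x(\tfrac32)^i\} < \tfrac12$. Then for every integer $n \ge 1$, $\bigcap_{i=1}^{n} X_i$ is exactly the set of positive multiples of $2^n$.
   Context: For a real number $a$, $\{a\}$ denotes its fractional part, $a - \lfloor a\rfloor$. *)

From Stdlib Require Import Reals Arith.
From Coquelicot Require Import Coquelicot.
Open Scope R_scope.

Definition frac (a : R) : R := a - IZR (floor a).

Definition in_X (i x : nat) : Prop :=
  (0 < x)%nat /\ frac (INR x * (3/2) ^ i) < 1/2.

(* x (3/2)^i = x 3^i / 2^i, so {x (3/2)^i} = (x 3^i mod 2^i) / 2^i, and the condition
   {x (3/2)^i} < 1/2 says that this remainder is below 2^(i-1).  If 2^i divides x the
   remainder is 0.  Conversely, if x = 2^m y then, 3 being odd, the remainder of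
   x 3^(m+1) modulo 2^(m+1) is 2^m (y mod 2), so membership in X_(m+1) forces y to be
   even; induction on m gives 2^n | x. *)

From Stdlib Require Import Reals Arith Lia Lra.
From Coquelicot Require Import Coquelicot.
Open Scope R_scope.

Lemma floor_eq (z : Z) (a : R) : IZR z <= a < IZR z + 1 -> floor a = z.
Proof.
  intros Ha. unfold floor. destruct (floor_ex a) as [m Hm]; simpl.
  rewrite <- (Zfloor_eq m a Hm). exact (Zfloor_eq z a Ha).
Qed.

Lemma frac_INR_div (a b : nat) :
  (0 < b)%nat -> frac (INR a / INR b) = INR (a mod b) / INR b.
Proof.
  intros Hb.
  assert (Hb' : 0 < INR b) by (apply lt_0_INR; exact Hb).
  assert (Hr : (a mod b < b)%nat) by (apply Nat.mod_upper_bound; lia).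
  assert (Hr' : INR (a mod b) / INR b < 1).
  { apply Rlt_div_l; [lra|]. rewrite Rmult_1_l. apply lt_INR, Hr. }
  assert (Hr0 : 0 <= INR (a mod b) / INR b).
  { apply Rdiv_le_0_compat; [apply pos_INR | lra]. }
  assert (Hsplit : INR a / INR b = INR (a / b) + INR (a mod b) / INR b).
  { rewrite (Nat.div_mod_eq a b) at 1. rewrite plus_INR, mult_INR. field. lra. }
  unfold frac. rewrite (floor_eq (Z.of_nat (a / b))); rewrite <- INR_IZR_INZ, Hsplit; lra.
Qed.

Lemma frac_INR_div_lt_half (a b : nat) :
  (0 < b)%nat -> frac (INR a / INR b) < 1/2 <-> (2 * (a mod b) < b)%nat.
Proof.
  intros Hb. assert (Hb' : 0 < INR b) by (apply lt_0_INR; exact Hb).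
  rewrite frac_INR_div by exact Hb.
  rewrite Rlt_div_l by exact Hb'.
  split; intros H.
  - apply INR_lt. rewrite mult_INR. simpl INR. lra.
  - apply lt_INR in H. rewrite mult_INR in H. simpl INR in H. lra.
Qed.

Lemma INR_mul_three_halves_pow (x i : nat) :
  INR x * (3/2) ^ i = INR (x * 3 ^ i) / INR (2 ^ i).
Proof.
  rewrite mult_INR, !pow_INR. simpl INR.
  replace (1 + 1 + 1) with 3 by ring. replace (1 + 1) with 2 by ring.
  unfold Rdiv. rewrite Rpow_mult_distr, pow_inv. ring.
Qed.

Lemma in_X_iff (i x : nat) :
  in_X i x <-> (0 < x)%nat /\ (2 * ((x * 3 ^ i) mod 2 ^ i) < 2 ^ i)%nat.
Proof.
  unfold in_X. rewrite INR_mul_three_halves_pow, frac_INR_div_lt_half.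
  - reflexivity.
  - apply Nat.neq_0_lt_0, Nat.pow_nonzero. lia.
Qed.

Lemma in_X_of_pow2_divide (i x : nat) :
  (0 < x)%nat -> Nat.divide (2 ^ i) x -> in_X i x.
Proof.
  intros Hx [y ->]. apply in_X_iff. split; [exact Hx|].
  rewrite Nat.mul_shuffle0, Nat.Div0.mod_mul. simpl.
  apply Nat.neq_0_lt_0, Nat.pow_nonzero. lia.
Qed.

Lemma three_pow_mod_2 (i : nat) : (3 ^ i mod 2 = 1)%nat.
Proof.
  induction i as [|i IH]; [reflexivity|].
  rewrite Nat.pow_succ_r', Nat.Div0.mul_mod, IH. reflexivity.
Qed.

Lemma pow2_divide_succ (m x : nat) :
  Nat.divide (2 ^ m) x -> in_X (S m) x -> Nat.divide (2 ^ S m) x.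
Proof.
  intros [y ->] HX. apply in_X_iff in HX as [_ Hlt].
  assert (Hrem : ((y * 2 ^ m * 3 ^ S m) mod 2 ^ S m = (y mod 2) * 2 ^ m)%nat).
  { rewrite Nat.mul_shuffle0, (Nat.pow_succ_r' 2 m), Nat.Div0.mul_mod_distr_r.
    rewrite Nat.Div0.mul_mod, three_pow_mod_2, Nat.mul_1_r, Nat.Div0.mod_mod.
    reflexivity. }
  rewrite Hrem, Nat.pow_succ_r' in Hlt.
  assert (Hy : (y mod 2 = 0)%nat) by nia.
  exists (y / 2)%nat. rewrite (Nat.div_mod_eq y 2) at 1. rewrite Hy, Nat.pow_succ_r'. ring.
Qed.

Lemma pow2_divide_of_in_X (n x : nat) :
  (forall i : nat, (1 <= i <= n)%nat -> in_X i x) -> Nat.divide (2 ^ n) x.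
Proof.
  induction n as [|m IH]; intros HX.
  - apply Nat.divide_1_l.
  - apply pow2_divide_succ.
    + apply IH. intros i Hi. apply HX. lia.
    + apply HX. lia.
Qed.

Theorem lemma4p7 (n : nat) (hn : (1 <= n)%nat) (x : nat) :
  (forall i : nat, (1 <= i <= n)%nat -> in_X i x) <->
  (exists k : nat, (1 <= k)%nat /\ x = (k * 2 ^ n)%nat).
Proof.
  split.
  - intros HX.
    assert (Hx : (0 < x)%nat) by (apply (HX 1%nat); lia).
    destruct (pow2_divide_of_in_X n x HX) as [k Hk].
    exists k. split; [|exact Hk].
    destruct k; [simpl in Hk; lia | lia].
  - intros [k [Hk ->]] i Hi. apply in_X_of_pow2_divide.
    + assert (0 < 2 ^ n)%nat by (apply Nat.neq_0_lt_0, Nat.pow_nonzero; lia). nia.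
    + exists (k * 2 ^ (n - i))%nat.
      rewrite <- Nat.mul_assoc, <- Nat.pow_add_r. do 2 f_equal. lia.
Qed.
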